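(* Let $(\mathcal{S},\mathcal{A},P)$ be a finite communicating MDP and $V^*(s,g)$ the negative minimum expected number of steps to reach $g$ from $s$ (so $V^*(g,g)=0$). Let $\epsilon_V,\epsilon_\psi,\epsilon_\pi,\epsilon_{drift}\ge0$, and assume: (a) $V_\omega:\mathcal{S}\times\mathcal{S}\to\mathbb{R}$ satisfies $|V_\omega(s,g)-V^*(s,g)|\le\epsilon_V$ for all $s,g$; (b) $\phi:\mathcal{S}\times\mathcal{S}\to\mathcal{S}$ satisfies $\max(0,V_\omega(s,g)-V_\omega(s,\hat s)-V_\omega(\hat s,g))\le\epsilon_\psi$ for all $s,g$, with $\hat s=\phi(s,g)$. Fix $s_0,s_g\in\mathcal{S}$ and an integer $M\ge1$. Let $s_0,s_1,\dots,s_M$ be random states (with $s_0$ deterministic) and $C_0,\dots,C_{M-1}$ random nonnegative costs such that, writing $\hat s_k=\phi(s_k,s_g)$, for each $0\le k<M$: (c) $\mathbb{E}[C_k\mid s_k]\le -V^*(s_k,\hat s_k)+\epsilon_\pi$; (d) $\big|\mathbb{E}[V^*(s_{k+1},s_g)\mid s_k]-V^*(\hat s_k,s_g)\big|\le\epsilon_{drift}$; and (e) $s_M=s_g$ almost surely. Then $$\mathbb{E}\Big[\sum_{k=0}^{M-1}C_k\Big]\le -V^*(s_0,s_g)+M\,(\epsilon_\pi+3\epsilon_V+\epsilon_\psi+\epsilon_{drift}).$$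
   Context: Interpretation: at high-level step $k$ the agent at state $s_k$ proposes the subgoal $\hat s_k=\phi(s_k,s_g)$ using an anticipation model $\phi$, then runs a low-level goal-conditioned policy toward $\hat s_k$; $C_k$ is the number of steps (cost) of that segment and $s_{k+1}$ is the (random) state where it ends. A finite MDP is communicating if for any two states $s_i,s_j$ some policy reaches $s_j$ from $s_i$ with nonzero probability. Reward is $-1$ per step, so $-V^*(s,g)$ is the minimum expected hitting time of $g$ from $s$. $V_\omega$ is a learned approximation of $V^*$. *)

From HB Require Import structures.
From mathcomp Require Import all_boot all_order all_algebra.
From mathcomp Require Import all_classical all_reals all_analysis.

Set Implicit Arguments.
Unset Strict Implicit.
Unset Printing Implicit Defensive.

Import Order.TTheory GRing.Theory Num.Theory.
Import numFieldNormedType.Exports.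
Local Open Scope classical_set_scope.
Local Open Scope ring_scope.

Section MDP.
Variables (R : realType) (S A : finType).

(* A finite MDP: transition kernel P s a s' = Pr(next = s' | state s, action a). *)
Definition is_kernel (P : S -> A -> S -> R) : Prop :=
  forall s a, (forall s', 0 <= P s a s') /\ \sum_(s' : S) P s a s' = 1.

Definition history := seq (S * A).
Definition is_policy (pi : history -> S -> A -> R) : Prop :=
  forall h s, (forall a, 0 <= pi h s a) /\ \sum_(a : A) pi h s a = 1.

(* avoid P pi g h s n = probability, under policy pi (with past history h and
   current state s = s_0), that s_0, ..., s_n are all different from g,
   i.e. Pr(T_g > n) where T_g = min {t >= 0 | s_t = g}. *)
Fixpoint avoid (P : S -> A -> S -> R) (pi : history -> S -> A -> R) (g : S)
    (h : history) (s : S) (n : nat) : R :=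
  if s == g then 0 else
  match n with
  | 0 => 1
  | n'.+1 => \sum_(a : A) pi h s a *
              \sum_(s' : S) P s a s' * avoid P pi g (rcons h (s, a)) s' n'
  end.

(* Expected hitting time E[T_g] = sum_{n >= 0} Pr(T_g > n) (in \bar R). *)
Definition exp_hit (P : S -> A -> S -> R) (pi : history -> S -> A -> R)
    (s g : S) : \bar R :=
  (\sum_(0 <= n <oo) (avoid P pi g [::] s n)%:E)%E.

(* Communicating: from any s_i some policy reaches s_j with nonzero probability
   (Pr(T_{s_j} <= n) = 1 - Pr(T_{s_j} > n) > 0 for some n). *)
Definition communicating (P : S -> A -> S -> R) : Prop :=
  forall si sj, exists pi, is_policy pi /\ exists n, avoid P pi sj [::] si n < 1.

Definition min_hit (P : S -> A -> S -> R) (s g : S) : \bar R :=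
  ereal_inf [set exp_hit P pi s g | pi in [set pi | is_policy pi]].

(* V^*(s,g) = - (minimum expected number of steps to reach g from s);
   finite for communicating MDPs. *)
Definition Vstar (P : S -> A -> S -> R) (s g : S) : R := - fine (min_hit P s g).

End MDP.

Section CondExp.
Variables (R : realType) (d : measure_display) (T : measurableType d).
Variable (Pr : probability T R).

(* Conditional expectation of X given a discrete (finite-valued) random
   variable Y, evaluated on the event {Y = y} (meaningful when Pr(Y = y) > 0):
   E[X | Y = y] = E[X 1_{Y = y}] / Pr(Y = y). *)
Definition condE (S : Type) (X : T -> R) (Y : T -> S) (y : S) : \bar R :=
  ((\int[Pr]_(t in Y @^-1` [set y]) (X t)%:E) *
     ((fine (Pr (Y @^-1` [set y])))^-1)%:E)%E.
End CondExp.

From HB Require Import structures.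
From mathcomp Require Import all_boot all_order all_algebra.
From mathcomp Require Import all_classical all_reals all_analysis measurable_realfun.
From mathcomp Require Import lra.

Set Implicit Arguments.
Unset Strict Implicit.
Unset Printing Implicit Defensive.

Import Order.TTheory GRing.Theory Num.Theory.

(* With the potential U x = - V*(x, s_g) >= 0, hypotheses (c) and (d) bound,
   on each event {s_k = x}, the expected cost of segment k plus the expected
   potential after it by (- V*(x, ŝ) + eps_pi) + (- V*(ŝ, s_g) + eps_drift);
   by (a) and (b) the detour through ŝ costs at most 3 eps_V + eps_psi more
   than U x.  Summing over the finitely many values of s_k gives
   E[C_k] <= E[U s_k] - E[U s_(k+1)] + eps, which telescopes to
   U s_0 - U s_g + M eps. *)

Local Open Scope classical_set_scope.
Local Open Scope ring_scope.

Lemma sum_mul_point_mass (S : finType) (R : numDomainType) (p h : S -> R) y :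
  (forall x, 0 <= p x) -> \sum_x p x = 1 -> p y = 1 ->
  \sum_x h x * p x = h y.
Proof.
move=> p0 p1 py1.
have {}p0 x : x != y -> p x = 0.
  move=> xy; move: p1; rewrite (bigD1 y) //= py1 -[RHS]addr0 => /addrI /eqP.
  by rewrite psumr_eq0 // => /allP/(_ x); rewrite mem_index_enum xy => /(_ isT)/eqP.
rewrite (bigD1 y) //= py1 mulr1 big1 ?addr0 // => x xy.
by rewrite p0 ?mulr0.
Qed.

Lemma leeB_of_abse_le (R : realDomainType) (e : \bar R) (b delta : R) :
  (`|e - b%:E| <= delta%:E)%E -> ((b - delta)%:E <= e)%E.
Proof.
case: e => [r| |] //=; [|by rewrite leey..].
by rewrite !lee_fin ler_norml => /andP[? _]; lra.
Qed.

Section FiniteRandomVariable.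
Context (R : realType) (d : measure_display) (T : measurableType d).
Context (Pr : probability T R) (S : finType) (Y : T -> S).
Hypothesis mY : forall x, measurable (Y @^-1` [set x]).

Definition pmf (x : S) : R := fine (Pr (Y @^-1` [set x])).

Lemma pmfE x : Pr (Y @^-1` [set x]) = (pmf x)%:E.
Proof.
rewrite /pmf fineK // ge0_fin_numE //.
exact: le_lt_trans (probability_le1 _ (mY x)) (ltry 1).
Qed.

Lemma pmf_ge0 x : 0 <= pmf x.
Proof. exact: fine_ge0. Qed.

Lemma measurable_fun_comp_rv (h : S -> R) :
  measurable_fun setT (EFin \o (h \o Y)).
Proof.
apply/measurable_EFinP => _ B mB.
have -> : setT `&` (h \o Y) @^-1` B = \bigcup_(x in [set x | B (h x)]) Y @^-1` [set x].
  apply/seteqP; split => t /=; first by move=> [_ Bt]; exists (Y t).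
  by move=> [x Bx /= ->].
by apply: fin_bigcup_measurable => //; exact: finite_finset.
Qed.

Lemma ge0_integral_fiber_sum (f : T -> \bar R) :
  measurable_fun setT f -> (forall t, 0 <= f t)%E ->
  (\int[Pr]_t f t = \sum_(x : S) \int[Pr]_(t in Y @^-1` [set x]) f t)%E.
Proof.
move=> mf f0.
have cover : \big[setU/set0]_(x <- index_enum S) Y @^-1` [set x] = setT.
  apply/seteqP; split => // t _; rewrite -bigcup_seq.
  by exists (Y t) => //=; rewrite mem_index_enum.
rewrite -cover ge0_integral_bigsetU ?index_enum_uniq ?cover //.
by move=> x y _ _ [t [/= <- <-]].
Qed.

Definition mean_comp (h : S -> R) : R := \sum_x h x * pmf x.

Lemma integral_comp_rv (h : S -> R) : (forall x, 0 <= h x) ->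
  (\int[Pr]_t (h (Y t))%:E = (mean_comp h)%:E)%E.
Proof.
move=> h0; rewrite ge0_integral_fiber_sum; last 2 first.
- exact: measurable_fun_comp_rv.
- by move=> t; rewrite lee_fin.
rewrite -sumEFin; apply: eq_bigr => x _.
rewrite (eq_integral (fun _ => (h x)%:E)); last by move=> t; rewrite inE /= => ->.
by rewrite integral_cst // EFinM -pmfE.
Qed.

Lemma sum_pmf : \sum_x pmf x = 1.
Proof.
apply/EFin_inj; rewrite -(eq_bigr _ (fun x _ => mul1r (pmf x))).
rewrite -(@integral_comp_rv (fun _ => 1)) ?integral_cst // mul1e.
exact: probability_setT.
Qed.

Lemma condE_mul_pmf (X : T -> R) x : 0 < pmf x ->
  (condE Pr X Y x * (pmf x)%:E = \int[Pr]_(t in Y @^-1` [set x]) (X t)%:E)%E.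
Proof.
move=> px0; rewrite /condE -/(pmf x) -muleA -EFinM mulVf ?mule1 //.
by rewrite gt_eqF.
Qed.

Lemma integral_fiber_pmf0 (f : T -> \bar R) x :
  measurable_fun setT f -> pmf x = 0 ->
  (\int[Pr]_(t in Y @^-1` [set x]) f t = 0)%E.
Proof.
move=> mf px0; apply: null_set_integral => //; first exact: measurable_funS mf.
by apply: eq_trans (pmfE x) _; rewrite px0.
Qed.

Lemma integral_fiber_le_condE (X : T -> R) x c : 0 < pmf x ->
  (condE Pr X Y x <= c%:E)%E ->
  (\int[Pr]_(t in Y @^-1` [set x]) (X t)%:E <= (c * pmf x)%:E)%E.
Proof.
move=> px0 Xc; rewrite -condE_mul_pmf // EFinM.
by apply: lee_wpmul2r => //; rewrite lee_fin pmf_ge0.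
Qed.

Lemma integral_fiber_ge_condE (X : T -> R) x c : 0 < pmf x ->
  (c%:E <= condE Pr X Y x)%E ->
  ((c * pmf x)%:E <= \int[Pr]_(t in Y @^-1` [set x]) (X t)%:E)%E.
Proof.
move=> px0 cX; rewrite -condE_mul_pmf // EFinM.
by apply: lee_wpmul2r => //; rewrite lee_fin pmf_ge0.
Qed.

Lemma integral_fiber_cost_drift_le (X : T -> R) (Z : T -> S) (V : S -> R)
    x a b delta :
  (forall y, V y <= 0) -> 0 < pmf x ->
  (condE Pr X Y x <= a%:E)%E ->
  (`|condE Pr (fun t => V (Z t)) Y x - b%:E| <= delta%:E)%E ->
  (\int[Pr]_(t in Y @^-1` [set x]) (X t)%:E
     + \int[Pr]_(t in Y @^-1` [set x]) (- V (Z t))%:E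
   <= ((a - b + delta) * pmf x)%:E)%E.
Proof.
move=> V_le0 px0 Xa /leeB_of_abse_le VZb.
have cost := integral_fiber_le_condE px0 Xa.
have drift : (\int[Pr]_(t in Y @^-1` [set x]) (- V (Z t))%:E
              <= ((delta - b) * pmf x)%:E)%E.
  have := integral_fiber_ge_condE px0 VZb.
  rewrite (eq_integral (fun t => - (- V (Z t))%:E)%E); last first.
    by move=> t _; rewrite -EFinN opprK.
  rewrite integral_ge0N; last by move=> t _; rewrite lee_fin oppr_ge0.
  by rewrite leeNr -EFinN -mulNr opprB.
apply: le_trans (leeD cost drift) _; rewrite -EFinD lee_fin.
by rewrite -mulrDl addrA addrAC.
Qed.

End FiniteRandomVariable.

Section PotentialDrift.
Context (R : realType) (d : measure_display) (T : measurableType d).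
Context (Pr : probability T R) (S : finType).
Context (st : nat -> T -> S) (C : nat -> T -> R) (U : S -> R) (eps : R).
Hypothesis mst : forall k x, measurable (st k @^-1` [set x]).
Hypothesis mC : forall k, measurable_fun setT (C k).
Hypothesis C_ge0 : forall k t, 0 <= C k t.
Hypothesis U_ge0 : forall x, 0 <= U x.

Let meanU k := mean_comp Pr (st k) U.

Definition drift_bounded k := forall x, 0 < pmf Pr (st k) x ->
  (\int[Pr]_(t in st k @^-1` [set x]) (C k t)%:E
     + \int[Pr]_(t in st k @^-1` [set x]) (U (st k.+1 t))%:E
   <= ((U x + eps) * pmf Pr (st k) x)%:E)%E.

Lemma expected_cost_le_drift k : drift_bounded k ->
  (\int[Pr]_t (C k t)%:E <= (meanU k - meanU k.+1 + eps)%:E)%E.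
Proof.
move=> hk.
have mCk : measurable_fun setT (EFin \o C k) by apply/measurable_EFinP.
have mUk : measurable_fun setT (EFin \o (U \o st k.+1)).
  exact: measurable_fun_comp_rv.
have fibers : (\int[Pr]_t (C k t)%:E + (meanU k.+1)%:E
               <= \sum_x ((U x + eps) * pmf Pr (st k) x)%:E)%E.
  rewrite -integral_comp_rv // (ge0_integral_fiber_sum Pr (mst k)) //; last first.
    by move=> t; rewrite lee_fin.
  rewrite (ge0_integral_fiber_sum Pr (mst k)) //; last by move=> t; rewrite lee_fin.
  rewrite -big_split /=; apply: lee_sum => x _.
  have [px0|px_gt0] := eqVneq (pmf Pr (st k) x) 0; last first.
    by apply: hk; rewrite lt0r px_gt0 pmf_ge0.
  by rewrite !integral_fiber_pmf0 // px0 mulr0 adde0.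
have meanDeps : \sum_x (U x + eps) * pmf Pr (st k) x = meanU k + eps.
  rewrite /meanU /mean_comp; under eq_bigr do rewrite mulrDl.
  by rewrite big_split /= -mulr_sumr sum_pmf // mulr1.
rewrite sumEFin meanDeps in fibers.
by rewrite addrAC EFinB leeBrDr.
Qed.

Lemma expected_total_cost_le_drift M : (forall k, (k < M)%N -> drift_bounded k) ->
  (\int[Pr]_t (\sum_(k < M) C k t)%:E
     <= (mean_comp Pr (st 0) U - mean_comp Pr (st M) U + M%:R * eps)%:E)%E.
Proof.
move=> hM.
rewrite (eq_integral (fun t => \sum_(k < M) (C k t)%:E)%E); last first.
  by move=> t _; rewrite sumEFin.
rewrite ge0_integral_sum //; last 2 first.
- by move=> k; apply/measurable_EFinP.
- by move=> k t _; rewrite lee_fin.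
apply: (@le_trans _ _ (\sum_(k < M) (meanU k - meanU k.+1 + eps)%:E)%E).
  by apply: lee_sum => k _; exact/expected_cost_le_drift/hM.
rewrite sumEFin lee_fin big_split /= sumr_const card_ord mulr_natl.
rewrite -(big_mkord xpredT (fun i => meanU i - meanU i.+1)).
rewrite (@telescope_sumr_eq _ _ _ (fun k => - meanU k)) //.
  by rewrite opprK [- _ + _]addrC.
by move=> k _; rewrite opprK addrC.
Qed.

End PotentialDrift.

Section OptimalValue.
Context (R : realType) (S A : finType) (P : S -> A -> S -> R).

Lemma avoid_ge0 pi g : is_kernel P -> is_policy pi ->
  forall n h s, 0 <= avoid P pi g h s n.
Proof.
move=> hP hpi; elim=> [|n IH] h s /=; case: ifP => // _.
apply: sumr_ge0 => a _; apply: mulr_ge0; first by have [] := hpi h s.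
by apply: sumr_ge0 => s' _; apply: mulr_ge0 => //; have [] := hP s a.
Qed.

Lemma Vstar_le0 s g : is_kernel P -> Vstar P s g <= 0.
Proof.
move=> hP; rewrite /Vstar oppr_le0; apply: fine_ge0.
apply/ereal_infP => _ [pi hpi <-].
by apply: nneseries_ge0 => n _ _; rewrite lee_fin avoid_ge0.
Qed.

Lemma exp_hit_xx pi s : exp_hit P pi s s = 0%E.
Proof. by apply: eseries0 => -[|n] _ _ /=; rewrite eqxx. Qed.

Lemma Vstar_xx s : Vstar P s s = 0.
Proof.
rewrite /Vstar /min_hit.
have [->|/set0P[_ [pi hpi _]]] :=
    eqVneq [set exp_hit P pi s s | pi in [set pi | is_policy pi]] set0.
  by rewrite ereal_inf0 oppr0.
suff -> : [set exp_hit P pi s s | pi in [set pi | is_policy pi]] = [set 0%E].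
  by rewrite ereal_inf1 oppr0.
apply/seteqP; split => e /=; first by move=> [pi' _ <-]; rewrite exp_hit_xx.
by move=> ->; exists pi => //; rewrite exp_hit_xx.
Qed.

End OptimalValue.

Lemma subgoal_split_le (S : Type) (R : realDomainType) (V Vw : S -> S -> R)
    (epsV epspsi : R) s m g :
  (forall s g, `|Vw s g - V s g| <= epsV) ->
  Num.max 0 (Vw s g - Vw s m - Vw m g) <= epspsi ->
  - V s m - V m g <= - V s g + 3 * epsV + epspsi.
Proof.
move=> hV; rewrite ge_max => /andP[_ hsplit].
move: (hV s m) (hV m g) (hV s g); rewrite !ler_norml.
by move=> /andP[? ?] /andP[? ?] /andP[? ?]; lra.
Qed.

Theorem theorem3 (R : realType) (S A : finType) (P : S -> A -> S -> R)
  (hP : is_kernel P) (hcomm : communicating P)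
  (epsV epspsi epspi epsdrift : R)
  (hV : 0 <= epsV) (hpsi : 0 <= epspsi) (hpi : 0 <= epspi) (hdrift : 0 <= epsdrift)
  (Vw : S -> S -> R) (phi : S -> S -> S)
  (ha : forall s g, `|Vw s g - Vstar P s g| <= epsV)
  (hb : forall s g, Num.max 0 (Vw s g - Vw s (phi s g) - Vw (phi s g) g) <= epspsi)
  (s0 sg : S) (M : nat) (hM : (1 <= M)%N)
  (d : measure_display) (T : measurableType d) (Pr : probability T R)
  (st : nat -> T -> S) (C : nat -> T -> R)
  (hst_meas : forall k x, measurable (st k @^-1` [set x]))
  (hC_meas : forall k, measurable_fun setT (C k))
  (hC_ge0 : forall k t, 0 <= C k t)
  (hs0 : forall t, st 0%N t = s0)
  (hc : forall k, (k < M)%N -> forall x, (0 < Pr (st k @^-1` [set x]))%E ->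
          (condE Pr (C k) (st k) x <= (- Vstar P x (phi x sg) + epspi)%:E)%E)
  (hd : forall k, (k < M)%N -> forall x, (0 < Pr (st k @^-1` [set x]))%E ->
          (`| condE Pr (fun t => Vstar P (st k.+1 t) sg) (st k) x
              - (Vstar P (phi x sg) sg)%:E | <= epsdrift%:E)%E)
  (he : Pr (st M @^-1` [set sg]) = 1%E) :
  (\int[Pr]_t (\sum_(k < M) C k t)%:E
     <= (- Vstar P s0 sg + M%:R * (epspi + 3 * epsV + epspsi + epsdrift))%:E)%E.
Proof.
pose U x := - Vstar P x sg.
set eps := epspi + 3 * epsV + epspsi + epsdrift.
have U_ge0 x : 0 <= U x by rewrite oppr_ge0 Vstar_le0.
have mean_point k y : Pr (st k @^-1` [set y]) = 1%E -> mean_comp Pr (st k) U = U y.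
  move=> hy; apply: sum_mul_point_mass (pmf_ge0 _ _) (sum_pmf _ (hst_meas k)) _.
  by rewrite /pmf hy.
have mean0 : mean_comp Pr (st 0) U = U s0.
  apply: mean_point; rewrite (_ : _ @^-1` _ = setT) ?probability_setT //.
  by apply/seteqP; split => t // _; exact: hs0.
have meanM : mean_comp Pr (st M) U = 0.
  by rewrite (mean_point _ _ he) /U Vstar_xx oppr0.
apply: le_trans
  (expected_total_cost_le_drift (eps := eps) hst_meas hC_meas hC_ge0 U_ge0 _) _.
  move=> k kM x px_gt0.
  have Px_gt0 : (0 < Pr (st k @^-1` [set x]))%E by rewrite pmfE // lte_fin.
  apply: le_trans (integral_fiber_cost_drift_le (Z := st k.+1)
    (fun y => Vstar_le0 y sg hP) px_gt0 (hc k kM x Px_gt0) (hd k kM x Px_gt0)) _.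
  rewrite lee_fin ler_wpM2r ?pmf_ge0 //.
  have := subgoal_split_le ha (hb x sg); rewrite /U /eps; lra.
by rewrite mean0 meanM subr0 /U.
Qed.
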